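(* Let $G$ be an SE-graph and let $P,Q$ be standard, weakly intersecting directed paths in $G$ with $\alpha(t_P)=\alpha(t_Q)$, and with either $\alpha(s_P)\ne\alpha(s_Q)$ or $\alpha(s_P)=\alpha(s_Q)=0$. Suppose $P$ is lower than $Q$. Then $w(P)w(Q)=q\,w(Q)w(P)$.
   Context: Fix a field $\mathbb K$, $q\in\mathbb K^\ast$. An SE-graph is a finite directed graph $G=(V,E)$ embedded in the plane (planar) whose edges are horizontal directed to the right (H-edges) or vertical directed downward (V-edges), with sources $r_1,\dots,r_m$ on a vertical line in this order upward and sinks $c_1,\dots,c_n$ on a horizontal line in order left to right, sources incident only to H-edges and sinks only to V-edges, every vertex lying on a directed source-to-sink path. Here the sources lie on the ray $\{0\}\times\mathbb R_{\ge0}$ and the sinks on the ray $\mathbb R_{\ge 0}\times\{0\}$; a point $v$ has coordinates $(\alpha(v),\beta(v))$. Standing convention: two vertices have the same first (resp. second) coordinate if and only if they lie on a common vertical (resp. horizontal) directed path of $G$. Let $W$ be the inner vertices; $\mathcal L_G$ is the $\mathbb K$-algebra of Laurent polynomials in $W$ with, for distinct $u,v\in W$: $uv=qvu$ if there is a directed horizontal path from $u$ to $v$; $vu=quv$ if there is a directed vertical path from $u$ to $v$; $uv=vu$ otherwise. Edge weights: $w(e)=v$ if $e=(u,v)$ with $u$ a source; $w(e)=u^{-1}v$ for an H-edge $e=(u,v)$ with $u,v\in W$; $w(e)=1$ for V-edges. The weight of a directed path is the ordered product of its edge weights. For a directed path $P$, $s_P,t_P$ are its first and last vertices; $P$ is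 standard if it has at least one H-edge. $P,Q$ are weakly intersecting if $P\cap Q=\{s_P,t_P\}\cap\{s_Q,t_Q\}$. For weakly intersecting $P,Q$, $P$ is lower than $Q$ if there are points $x\in P$, $y\in Q$ with $\alpha(x)=\alpha(y)$ and $\beta(x)<\beta(y)$. *)

From HB Require Import structures.
From mathcomp Require Import all_boot all_order all_algebra.
From mathcomp Require Import reals.
Set Implicit Arguments. Unset Strict Implicit. Unset Printing Implicit Defensive.
Import Order.TTheory GRing.Theory Num.Theory.
Local Open Scope ring_scope.

Section SEGraphs.
Variables (R : realType) (V : finType) (E : rel V) (alpha beta : V -> R)
  (m n : nat) (src : 'I_m -> V) (snk : 'I_n -> V).

Definition is_src (v : V) : bool := [exists i, src i == v].
Definition is_snk (v : V) : bool := [exists j, snk j == v].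
Definition inner (v : V) : bool := ~~ is_src v && ~~ is_snk v.

(* H-edges (horizontal, to the right) and V-edges (vertical, downward) *)
Definition Hedge : rel V := fun u v => E u v && (beta u == beta v).
Definition Vedge : rel V := fun u v => E u v && (alpha u == alpha v).

Definition onseg (u v : V) (a b : R) : bool :=
  (Order.min (alpha u) (alpha v) <= a <= Order.max (alpha u) (alpha v)) &&
  (Order.min (beta u) (beta v) <= b <= Order.max (beta u) (beta v)).

Record SE_graph : Prop := {
  coord_inj : forall u v, alpha u = alpha v -> beta u = beta v -> u = v;
  edge_HV : forall u v, E u v ->
    (beta u = beta v /\ alpha u < alpha v) \/ (alpha u = alpha v /\ beta v < beta u);
  planar_vertex : forall u v w, E u v -> onseg u v (alpha w) (beta w) -> w = u \/ w = v;
  planar_edges : forall u v u' v', E u v -> E u' v' -> (u, v) <> (u', v') ->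
    forall a b, onseg u v a b -> onseg u' v' a b ->
    exists z, (z = u \/ z = v) /\ (z = u' \/ z = v') /\ a = alpha z /\ b = beta z;
  src_pos : forall i, alpha (src i) = 0 /\ 0 <= beta (src i);
  src_order : forall i j : 'I_m, (i < j)%N -> beta (src i) < beta (src j);
  snk_pos : forall j, beta (snk j) = 0 /\ 0 <= alpha (snk j);
  snk_order : forall i j : 'I_n, (i < j)%N -> alpha (snk i) < alpha (snk j);
  src_snk_disj : forall i j, src i <> snk j;
  src_no_in : forall u i, ~ E u (src i);
  snk_no_out : forall j v, ~ E (snk j) v;
  src_H : forall i v, E (src i) v -> beta (src i) = beta v;
  snk_V : forall j u, E u (snk j) -> alpha u = alpha (snk j);
  on_src_snk_path : forall v, exists i j, connect E (src i) v /\ connect E v (snk j);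
  (* standing convention (not imposed on pairs of distinct sources, resp. sinks) *)
  conv_alpha : forall u v, ~ (is_src u /\ is_src v /\ u <> v) ->
    (alpha u = alpha v <-> connect Vedge u v \/ connect Vedge v u);
  conv_beta : forall u v, ~ (is_snk u /\ is_snk v /\ u <> v) ->
    (beta u = beta v <-> connect Hedge u v \/ connect Hedge v u)
}.

(* A directed path is given by its first vertex s and the list p of the
   following vertices, with [path E s p]; its last vertex is [last s p]. *)
Definition pedges (s : V) (p : seq V) : seq (V * V) := zip (s :: p) p.

Definition standard (s : V) (p : seq V) : bool :=
  has (fun e : V * V => beta e.1 == beta e.2) (pedges s p).

Definition on_dpath (s : V) (p : seq V) (a b : R) : Prop :=
  (exists z, z \in s :: p /\ a = alpha z /\ b = beta z) \/
  (exists e, e \in pedges s p /\ onseg e.1 e.2 a b).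

Definition weakly_intersecting (sP : V) (pP : seq V) (sQ : V) (pQ : seq V) : Prop :=
  forall a b, (on_dpath sP pP a b /\ on_dpath sQ pQ a b) <->
    exists z, z \in [:: sP; last sP pP] /\ z \in [:: sQ; last sQ pQ] /\
              a = alpha z /\ b = beta z.

Definition lower (sP : V) (pP : seq V) (sQ : V) (pQ : seq V) : Prop :=
  exists a b b', on_dpath sP pP a b /\ on_dpath sQ pQ a b' /\ b < b'.

(* The algebra L_G: a K-algebra A together with x : V -> A such that the
   x w (w in W) are invertible and satisfy the defining relations of L_G.
   Quantifying over all such (A, x) is the universal property of L_G. *)
Variables (K : fieldType) (A : unitAlgType K).

Definition LG_relations (q : K) (x : V -> A) : Prop :=
  (forall u, inner u -> x u \is a GRing.unit) /\
  (forall u v, inner u -> inner v -> u <> v ->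
     (connect Hedge u v -> x u * x v = q *: (x v * x u)) /\
     (connect Vedge u v -> x v * x u = q *: (x u * x v)) /\
     (~~ connect Hedge u v -> ~~ connect Hedge v u ->
      ~~ connect Vedge u v -> ~~ connect Vedge v u -> x u * x v = x v * x u)).

Definition edge_weight (x : V -> A) (e : V * V) : A :=
  if is_src e.1 then x e.2
  else if inner e.1 && inner e.2 && (beta e.1 == beta e.2) then (x e.1)^-1 * x e.2
  else 1.

Definition path_weight (x : V -> A) (s : V) (p : seq V) : A :=
  \prod_(e <- pedges s p) edge_weight x e.

End SEGraphs.

From HB Require Import structures.
From mathcomp Require Import all_boot all_order all_algebra.
From mathcomp Require Import reals.
From mathcomp Require Import ring lra.
Set Implicit Arguments. Unset Strict Implicit. Unset Printing Implicit Defensive.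
Import Order.TTheory GRing.Theory Num.Theory.
Local Open Scope ring_scope.

(* The weight of an edge is a Laurent monomial in the generators x_u (u inner), and two
   generators q-commute: x_u x_v = q^c(u,v) x_v x_u, where c(u,v) is the sign of the
   horizontal (resp. vertical) displacement from u to v when u and v share a row (resp. a
   column), and 0 otherwise.  Hence w(P) w(Q) = q^S w(Q) w(P), where S is the pairing of the
   exponents of P and Q through c, and it remains to show S = 1.
   The row part of S vanishes edge by edge: H-edges of P and Q in a common row span disjoint
   intervals, so c is constant on their endpoints and the pairing is a multiple of the product
   of the degrees of the two monomials, which vanishes unless both edges leave a source, which
   weak intersection forbids.  The column part telescopes along both paths to
   c_V(t_P, t_Q) - #(V-edges of P entering t_Q) + #(V-edges of Q entering t_P).  Following Q
   from a point where it is above P shows that Q can only come down to P at its end, so either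
   t_P lies strictly below t_Q, or t_P = t_Q is entered by a V-edge of Q; in both cases the
   column part is 1. *)

(** * q-commuting elements *)

Section QCommute.
Variables (K : fieldType) (A : unitAlgType K) (q : K).
Hypothesis q_neq0 : q != 0.

Definition qcommute (a b : A) (k : int) := a * b = q ^ k *: (b * a).

Lemma qcommute1l b : qcommute 1 b 0.
Proof. by rewrite /qcommute expr0z scale1r mul1r mulr1. Qed.

Lemma qcommute_sym a b k : qcommute a b k -> qcommute b a (- k).
Proof. by rewrite /qcommute => ->; rewrite scalerA -expfzDr // addNr expr0z scale1r. Qed.

Lemma qcommute1r a : qcommute a 1 0.
Proof. by rewrite -oppr0; apply: qcommute_sym; apply: qcommute1l. Qed.

Lemma qcommuteMl a1 a2 b k1 k2 :
  qcommute a1 b k1 -> qcommute a2 b k2 -> qcommute (a1 * a2) b (k1 + k2).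
Proof.
rewrite /qcommute => h1 h2.
rewrite -mulrA h2 -scalerAr [a1 * (b * a2)]mulrA h1 -scalerAl scalerA.
by rewrite expfzDr // mulrC !mulrA.
Qed.

Lemma qcommuteMr a b1 b2 k1 k2 :
  qcommute a b1 k1 -> qcommute a b2 k2 -> qcommute a (b1 * b2) (k1 + k2).
Proof.
move=> h1 h2; rewrite -(opprK (k1 + k2)) opprD; apply: qcommute_sym.
exact: qcommuteMl (qcommute_sym h1) (qcommute_sym h2).
Qed.

Lemma qcommuteVl a b k : a \is a GRing.unit -> qcommute a b k -> qcommute a^-1 b (- k).
Proof.
move=> ua h; apply: qcommute_sym; rewrite /qcommute.
have -> : b * a^-1 = a^-1 * (a * b) * a^-1 by rewrite mulKr.
by rewrite h -scalerAr -scalerAl !mulrA mulrK.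
Qed.

Lemma qcommuteVr a b k : b \is a GRing.unit -> qcommute a b k -> qcommute a b^-1 (- k).
Proof.
by move=> ub h; rewrite -(opprK (- k)); apply/qcommute_sym/qcommuteVl/qcommute_sym.
Qed.

Lemma qcommute_prodl (I : eqType) (s : seq I) (F : I -> A) (k : I -> int) b :
  (forall i, i \in s -> qcommute (F i) b (k i)) ->
  qcommute (\prod_(i <- s) F i) b (\sum_(i <- s) k i).
Proof.
elim: s => [|i s IH] h; first by rewrite !big_nil; apply: qcommute1l.
rewrite !big_cons; apply: qcommuteMl; first by apply: h; rewrite mem_head.
by apply: IH => j hj; apply: h; rewrite in_cons hj orbT.
Qed.

Lemma qcommute_prodr (I : eqType) (s : seq I) (F : I -> A) (k : I -> int) a :
  (forall i, i \in s -> qcommute a (F i) (k i)) ->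
  qcommute a (\prod_(i <- s) F i) (\sum_(i <- s) k i).
Proof.
elim: s => [|i s IH] h; first by rewrite !big_nil; apply: qcommute1r.
rewrite !big_cons; apply: qcommuteMr; first by apply: h; rewrite mem_head.
by apply: IH => j hj; apply: h; rewrite in_cons hj orbT.
Qed.

End QCommute.
Section SEGraph.
Variables (R : realType) (V : finType) (E : rel V) (alpha beta : V -> R)
  (m n : nat) (src : 'I_m -> V) (snk : 'I_n -> V).
Hypothesis HG : SE_graph E alpha beta src snk.

Local Notation isrc := (is_src src).
Local Notation inn := (inner src snk).
Local Notation onseg := (onseg alpha beta).
Local Notation onp := (on_dpath alpha beta).

(** * Directed paths of an SE-graph in the plane *)

Lemma edge_irrefl u : ~ E u u.
Proof. by move=> e; case: (edge_HV HG e) => -[_]; rewrite ltxx. Qed.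

Lemma edge_coords_le u v : E u v -> alpha u <= alpha v /\ beta v <= beta u.
Proof. by move=> e; case: (edge_HV HG e) => -[-> h]; rewrite lexx ltW. Qed.

Lemma Hedge_alpha_lt u v : E u v -> beta u = beta v -> alpha u < alpha v.
Proof. by move=> e hb; case: (edge_HV HG e) => -[_ h] //; rewrite hb ltxx in h. Qed.

Lemma Vedge_beta_lt u v : E u v -> alpha u = alpha v -> beta v < beta u.
Proof. by move=> e ha; case: (edge_HV HG e) => -[_ h] //; rewrite ha ltxx in h. Qed.

Lemma edge_target_not_src u v : E u v -> ~~ isrc v.
Proof. by move=> e; apply/existsP => -[i /eqP hi]; subst v; apply: (src_no_in HG e). Qed.

Lemma edge_source_not_snk u v : E u v -> ~~ is_snk snk u.
Proof. by move=> e; apply/existsP => -[j /eqP hj]; subst u; apply: (snk_no_out HG e). Qed.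

Lemma edge_target_inner u v : E u v -> beta u = beta v -> inn v.
Proof.
move=> e hb; rewrite /inner (edge_target_not_src e) /=.
apply/existsP => -[j /eqP hj]; subst v.
by have h := coord_inj HG (snk_V HG e) hb; move: e; rewrite h => /edge_irrefl.
Qed.

Lemma src_edge_inner u v : E u v -> isrc u -> beta u = beta v /\ inn v.
Proof.
move=> e /existsP [i /eqP hi]; subst u; have hb := src_H HG e.
by split; last exact: edge_target_inner e hb.
Qed.

Lemma src_alpha v : isrc v -> alpha v = 0.
Proof. by case/existsP => i /eqP <-; case: (src_pos HG i). Qed.

Lemma alpha_eq0_src v : alpha v = 0 -> isrc v.
Proof.
move=> h0; case: (boolP (isrc v)) => // nv.
have [i [j [_ _]]] := on_src_snk_path HG v.
have si : isrc (src i) by apply/existsP; exists i.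
have ha : alpha (src i) = alpha v by rewrite h0; case: (src_pos HG i).
have hnot : ~ (isrc (src i) /\ isrc v /\ src i <> v) by move=> [_ [h _]]; rewrite h in nv.
case: ((conv_alpha HG hnot).1 ha) => /connectP [p].
- case: p => [|y p] /=; first by move=> _ h; rewrite h si in nv.
  case/andP => /andP [e /eqP hb] _ _.
  by have h := coord_inj HG hb (src_H HG e); move: e; rewrite h => /edge_irrefl.
- case/lastP: p => [|p y] /=; first by move=> _ h; rewrite -h si in nv.
  rewrite rcons_path last_rcons => /andP [_ /andP [e _]] hy; subst y.
  by case: (src_no_in HG e).
Qed.

Lemma connect_Hedge_coords u v :
  connect (Hedge E beta) u v -> beta u = beta v /\ alpha u <= alpha v.
Proof.
case/connectP => p; elim: p u => [|y p IH] u /=; first by move=> _ ->.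
case/andP => /andP [e /eqP hb] pth hl; have [hb' h] := IH _ pth hl.
by split; [rewrite hb | apply: le_trans h; have [] := edge_coords_le e].
Qed.

Lemma connect_Vedge_coords u v :
  connect (Vedge E alpha) u v -> alpha u = alpha v /\ beta v <= beta u.
Proof.
case/connectP => p; elim: p u => [|y p IH] u /=; first by move=> _ ->.
case/andP => /andP [e /eqP ha] pth hl; have [ha' h] := IH _ pth hl.
by split; [rewrite ha | apply: le_trans h _; have [] := edge_coords_le e].
Qed.

Lemma SE_path_uniq s p : path E s p -> uniq (s :: p).
Proof.
move=> pth; apply: (@sorted_uniq _ (fun u v => alpha u - beta u < alpha v - beta v)).
- by move=> y x z; apply: lt_trans.
- by move=> x; rewrite ltxx.
- by apply: sub_path pth => u v e; case: (edge_HV HG e) => -[h1 h2]; lra.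
Qed.

Lemma onseg_edge u v a b : E u v -> onseg u v a b ->
  (beta u = beta v /\ alpha u < alpha v /\ alpha u <= a /\ a <= alpha v /\ b = beta u) \/
  (alpha u = alpha v /\ beta v < beta u /\ a = alpha u /\ beta v <= b /\ b <= beta u).
Proof.
move=> e; rewrite /onseg; case: (edge_HV HG e) => -[h1 h2].
- rewrite h1 (min_l (ltW h2)) (max_r (ltW h2)) minxx maxxx.
  by case/andP => /andP [h3 h4] /andP [h5 h6]; left; do !split => //; lra.
- rewrite h1 (min_r (ltW h2)) (max_l (ltW h2)) minxx maxxx.
  by case/andP => /andP [h3 h4] /andP [h5 h6]; right; do !split => //; lra.
Qed.

Lemma onsegH u v a : beta u = beta v -> alpha u <= a -> a <= alpha v -> onseg u v a (beta u).
Proof. by move=> h1 h2 h3; rewrite /onseg h1 minxx maxxx lexx ge_min le_max h2 h3 !orbT. Qed.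

Lemma onsegV u v b : alpha u = alpha v -> beta v <= b -> b <= beta u -> onseg u v (alpha u) b.
Proof. by move=> h1 h2 h3; rewrite /onseg h1 minxx maxxx lexx ge_min le_max h2 h3 !orbT. Qed.

Lemma onseg_l u v : onseg u v (alpha u) (beta u).
Proof. by rewrite /onseg ge_min le_max lexx ge_min le_max lexx. Qed.

Lemma on_dpath_nil s a b : onp s [::] a b <-> a = alpha s /\ b = beta s.
Proof.
split; last by move=> [-> ->]; left; exists s; rewrite mem_head.
case=> -[z [hz h]]; last by move: hz; rewrite /pedges /= in_nil.
by move: hz h; rewrite inE => /eqP -> [-> ->].
Qed.

Lemma on_dpath_cons s y p a b : onp s (y :: p) a b <-> onseg s y a b \/ onp y p a b.
Proof.
split.
- case=> -[z [hz h]].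
  + move: hz; rewrite inE => /orP [/eqP hz|hz]; last by right; left; exists z.
    by subst z; case: h => -> ->; left; apply: onseg_l.
  + move: hz; rewrite /pedges /= inE => /orP [/eqP hz|hz]; last by right; right; exists z.
    by subst z; left.
- case=> [h|[[z [hz h]]|[z [hz h]]]].
  + by right; exists (s, y); rewrite /pedges /= mem_head.
  + by left; exists z; rewrite inE hz orbT.
  + by right; exists z; rewrite /pedges /= inE hz orbT.
Qed.

Lemma on_dpath_vertex s p z : z \in s :: p -> onp s p (alpha z) (beta z).
Proof. by move=> hz; left; exists z. Qed.

Lemma on_dpath_edge s p e a b : e \in pedges s p -> onseg e.1 e.2 a b -> onp s p a b.
Proof. by move=> he hs; right; exists e. Qed.

Lemma mem_pedges s p e : path E s p -> e \in pedges s p ->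
  [/\ E e.1 e.2, e.1 \in s :: p & e.2 \in s :: p].
Proof.
elim: p s => [|y p IH] s //=; case/andP => ey pth.
rewrite /pedges /= inE => /orP [/eqP ->|he]; first by rewrite /= ey !inE !eqxx orbT.
by have [h1 h2 h3] := IH _ pth he; split; rewrite // inE ?h2 ?h3 orbT.
Qed.

Lemma on_dpath_box s p a b : path E s p -> onp s p a b ->
  [/\ alpha s <= a, a <= alpha (last s p), beta (last s p) <= b & b <= beta s].
Proof.
elim: p s a b => [|y p IH] s a b /=; first by move=> _ /on_dpath_nil [-> ->]; rewrite !lexx.
case/andP => e pth /on_dpath_cons [hs|hr].
- have [h1 h2 h3 h4] := IH _ _ _ pth (on_dpath_vertex (mem_head y p)).
  by case: (onseg_edge e hs) => -[h5 [h6 [h7 [h8 h9]]]]; split; lra.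
- have [h1 h2 h3 h4] := IH _ _ _ pth hr.
  by have [h5 h6] := edge_coords_le e; split; lra.
Qed.

Lemma mem_path_box s p z : path E s p -> z \in s :: p -> [/\ alpha s <= alpha z,
  alpha z <= alpha (last s p), beta (last s p) <= beta z & beta z <= beta s].
Proof. by move=> pth hz; apply: on_dpath_box pth (on_dpath_vertex hz). Qed.

Lemma mem_pedges_box s p e : path E s p -> e \in pedges s p ->
  [/\ E e.1 e.2, alpha s <= alpha e.1, alpha e.2 <= alpha (last s p) &
      beta (last s p) <= beta e.2].
Proof.
move=> pth he; have [ee e1 e2] := mem_pedges pth he.
have [h1 _ _ _] := mem_path_box pth e1.
by have [_ h2 h3 _] := mem_path_box pth e2.
Qed.

Lemma on_dpath_antitone s p a1 b1 a2 b2 : path E s p ->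
  onp s p a1 b1 -> onp s p a2 b2 -> a1 < a2 -> b2 <= b1.
Proof.
elim: p s => [|y p IH] s /=.
  by move=> _ /on_dpath_nil [-> _] /on_dpath_nil [-> _]; rewrite ltxx.
case/andP => e pth /on_dpath_cons [h1|h1] /on_dpath_cons [h2|h2] lt12.
- by case: (onseg_edge e h1) => -[h3 [h4 [h5 [h6 h7]]]];
     case: (onseg_edge e h2) => -[h8 [h9 [h10 [h11 h12]]]]; lra.
- have [h3 h4 h5 h6] := on_dpath_box pth h2.
  by case: (onseg_edge e h1) => -[h7 [h8 [h9 [h10 h11]]]]; lra.
- have [h3 h4 h5 h6] := on_dpath_box pth h1.
  by case: (onseg_edge e h2) => -[h7 [h8 [h9 [h10 h11]]]]; lra.
- exact: IH pth h1 h2 lt12.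
Qed.

Lemma on_dpath_exists s p a : path E s p ->
  alpha s <= a -> a <= alpha (last s p) -> exists b, onp s p a b.
Proof.
elim: p s => [|y p IH] s /=.
  by move=> _ h1 h2; exists (beta s); apply/on_dpath_nil; split => //; lra.
case/andP => e pth h1 h2; case: (leP a (alpha y)) => h3.
- exists (beta s); apply/on_dpath_cons; left.
  case: (edge_HV HG e) => -[h4 h5]; first exact: onsegH.
  have -> : a = alpha s by lra.
  apply: onsegV => //; exact: ltW.
- by have [b hb] := IH _ pth (ltW h3) h2; exists b; apply/on_dpath_cons; right.
Qed.

Lemma on_dpath_convex s p a b0 b1 b : path E s p -> onp s p a b0 -> onp s p a b1 ->
  b0 <= b -> b <= b1 -> onp s p a b.
Proof.
elim: p s b0 b1 b => [|y p IH] s b0 b1 b /=.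
  move=> _ /on_dpath_nil [-> ->] /on_dpath_nil [_ ->] l1 l2.
  by apply/on_dpath_nil; split => //; lra.
case/andP => e pth /on_dpath_cons h0 /on_dpath_cons h1 l0 l1.
have [y1 y2 y3 y4] := mem_path_box pth (mem_head y p).
have onp_y b' : a = alpha y -> b' = beta y -> onp y p a b'.
  by move=> -> ->; apply: on_dpath_vertex (mem_head y p).
case: h0 => [h0|h0]; case: h1 => [h1|h1].
- apply/on_dpath_cons; left.
  case: (onseg_edge e h0) => -[h3 [h4 [h5 [h6 h7]]]];
  case: (onseg_edge e h1) => -[h8 [h9 [h10 [h11 h12]]]]; try lra.
  + have -> : b = beta s by lra.
    exact: onsegH.
  + by rewrite h5; apply: onsegV => //; lra.
- have [h3 h4 h5 h6] := on_dpath_box pth h1.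
  case: (onseg_edge e h0) => -[h7 [h8 [h9 [h10 h11]]]].
  + apply/on_dpath_cons; left; have -> : b = beta s by lra.
    exact: onsegH.
  + case: (leP b (beta y)) => hb.
    * apply/on_dpath_cons; right; apply: (IH _ (beta y) b1 b pth _ h1); try lra.
      by apply: onp_y; lra.
    * by apply/on_dpath_cons; left; rewrite h9; apply: onsegV => //; lra.
- have [h3 h4 h5 h6] := on_dpath_box pth h0.
  case: (onseg_edge e h1) => -[h7 [h8 [h9 [h10 h11]]]].
  + apply/on_dpath_cons; right; apply: (IH _ b0 (beta y) b pth h0); try lra.
    by apply: onp_y; lra.
  + case: (leP b (beta y)) => hb.
    * apply/on_dpath_cons; right; apply: (IH _ b0 (beta y) b pth h0); try lra.
      by apply: onp_y; lra.
    * by apply/on_dpath_cons; left; rewrite h9; apply: onsegV => //; lra.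
- by apply/on_dpath_cons; right; apply: (IH _ _ _ _ pth h0 h1).
Qed.

Lemma standard_alpha_lt s p : path E s p -> standard beta s p -> alpha s < alpha (last s p).
Proof.
move=> pth /hasP [e he /eqP hb]; have [ee h1 h2 _] := mem_pedges_box pth he.
by have := Hedge_alpha_lt ee hb; lra.
Qed.

(** * Edge weights as Laurent monomials *)

Definition cexpH (u v : V) : int := if beta u == beta v then sgz (alpha v - alpha u) else 0.
Definition cexpV (u v : V) : int := if alpha u == alpha v then sgz (beta v - beta u) else 0.
Definition cexp (u v : V) : int := cexpH u v + cexpV u v.

Lemma cexpH_anti u v : cexpH u v = - cexpH v u.
Proof. by rewrite /cexpH eq_sym; case: eqP => _; rewrite ?oppr0 // -sgzN opprB. Qed.

Lemma cexpV_anti u v : cexpV u v = - cexpV v u.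
Proof. by rewrite /cexpV eq_sym; case: eqP => _; rewrite ?oppr0 // -sgzN opprB. Qed.

Lemma cexp_anti u v : cexp u v = - cexp v u.
Proof. by rewrite /cexp cexpH_anti cexpV_anti opprD. Qed.

Lemma cexp_Hpath u v : u <> v -> connect (Hedge E beta) u v -> cexp u v = 1.
Proof.
move=> neq /connect_Hedge_coords [hb hle].
have ha : alpha u != alpha v by apply/eqP => ha; apply: neq; exact: (coord_inj HG ha hb).
rewrite /cexp /cexpH /cexpV hb eqxx (negbTE ha) addr0 gtr0_sgz //.
by rewrite subr_gt0 lt_neqAle ha.
Qed.

Lemma cexp_Vpath u v : u <> v -> connect (Vedge E alpha) u v -> cexp u v = -1.
Proof.
move=> neq /connect_Vedge_coords [ha hle].
have hb : beta u != beta v by apply/eqP => hb; apply: neq; exact: (coord_inj HG ha hb).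
rewrite /cexp /cexpH /cexpV ha eqxx (negbTE hb) add0r ltr0_sgz //.
by rewrite subr_lt0 lt_neqAle eq_sym hb.
Qed.

(* [(k, u)] stands for the factor [x u ^ k]; this mirrors [edge_weight]. *)
Definition edge_mono (e : V * V) : seq (int * V) :=
  if isrc e.1 then [:: (1, e.2)]
  else if inn e.1 && inn e.2 && (beta e.1 == beta e.2) then [:: (-1, e.1); (1, e.2)]
  else [::].

Definition meval (g : V -> int) (e : V * V) : int := \sum_(ku <- edge_mono e) ku.1 * g ku.2.

Definition mpair (c : V -> V -> int) (e f : V * V) : int :=
  meval (fun v => meval (fun u => c u v) e) f.

Definition mdeg (e : V * V) : int := \sum_(ku <- edge_mono e) ku.1.

Lemma mdegE e : mdeg e = (isrc e.1)%:Z.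
Proof.
rewrite /mdeg /edge_mono; case: ifP => _; first by rewrite big_cons big_nil addr0.
by case: ifP => _; rewrite ?big_cons ?big_nil //= addr0 addNr.
Qed.

Lemma edge_mono_vertex e ku : ku \in edge_mono e -> ku.2 = e.1 \/ ku.2 = e.2.
Proof.
rewrite /edge_mono; case: ifP => _; first by rewrite inE => /eqP ->; right.
by case: ifP => _ //; rewrite !inE => /orP [/eqP ->|/eqP ->]; [left|right].
Qed.

Lemma mpair_const c e f k :
  (forall ku lv, ku \in edge_mono e -> lv \in edge_mono f -> c ku.2 lv.2 = k) ->
  mpair c e f = k * mdeg e * mdeg f.
Proof.
move=> h; rewrite /mpair /meval /mdeg.
rewrite (eq_big_seq (fun lv => lv.1 * (k * \sum_(ku <- edge_mono e) ku.1))).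
  by rewrite -big_distrl /=; ring.
move=> lv hlv /=; congr (_ * _); rewrite big_distrr /=; apply: eq_big_seq => ku hku /=.
by rewrite (h _ _ hku hlv) mulrC.
Qed.

Lemma mpairD c1 c2 e f :
  mpair (fun u v => c1 u v + c2 u v) e f = mpair c1 e f + mpair c2 e f.
Proof.
rewrite /mpair /meval -big_split /=; apply: eq_bigr => lv _.
rewrite -mulrDr -big_split /=; congr (_ * _); apply: eq_bigr => ku _.
by rewrite mulrDr.
Qed.

Lemma edge_mono_H e : E e.1 e.2 -> edge_mono e != [::] ->
  beta e.1 = beta e.2 /\ alpha e.1 < alpha e.2.
Proof.
move=> ee hm; suff hb : beta e.1 = beta e.2 by split; last exact: Hedge_alpha_lt.
move: hm; rewrite /edge_mono; case: ifP => hs; first by have [] := src_edge_inner ee hs.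
by case: ifP => // /andP [_ /eqP].
Qed.

Lemma edge_mono_V e : E e.1 e.2 -> edge_mono e == [::] -> alpha e.1 = alpha e.2.
Proof.
move=> ee; rewrite /edge_mono; case: ifP => // hs; case: ifP => // hc _.
case: (edge_HV HG ee) => -[h1 h2] //.
have i1 : inn e.1 by rewrite /inner hs (edge_source_not_snk ee).
by move: hc; rewrite i1 (edge_target_inner ee h1) h1 eqxx.
Qed.

Lemma meval_step s y g : ~~ isrc s ->
  meval g (s, y) = g y - g s - (if edge_mono (s, y) == [::] then g y - g s else 0).
Proof.
move=> ns; rewrite /meval /edge_mono /= (negbTE ns).
by case: ifP => _ /=; rewrite ?big_cons big_nil /=; ring.
Qed.

Lemma sum_meval_path_nsrc s p g : path E s p -> ~~ isrc s ->
  \sum_(e <- pedges s p) meval g e =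
  g (last s p) - g s - \sum_(e <- pedges s p | edge_mono e == [::]) (g e.2 - g e.1).
Proof.
elim: p s => [|y p IH] s /=; first by move=> _ _; rewrite /pedges /= !big_nil subrr subr0.
case/andP => e pth ns; rewrite /pedges /= !big_cons.
rewrite (IH _ pth (edge_target_not_src e)) (meval_step y g ns).
by case: ifP => _ /=; ring.
Qed.

Lemma sum_meval_path s p g : path E s p -> p != [::] ->
  \sum_(e <- pedges s p) meval g e =
  g (last s p) - (if isrc s then 0 else g s) -
  \sum_(e <- pedges s p | edge_mono e == [::]) (g e.2 - g e.1).
Proof.
case: p => [|y p] //= /andP [e pth] _.
case: (boolP (isrc s)) => hs; last by rewrite (sum_meval_path_nsrc g _ hs) //= e.
have hm : edge_mono (s, y) = [:: (1, y)] by rewrite /edge_mono /= hs.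
rewrite /pedges /= !big_cons hm /= (sum_meval_path_nsrc g pth (edge_target_not_src e)).
by rewrite /meval hm big_cons big_nil /=; ring.
Qed.

Definition vdeg_in (s : V) (p : seq V) (v : V) : int :=
  \sum_(e <- pedges s p | edge_mono e == [::]) (e.2 == v)%:Z.

Lemma vdeg_in_last s p z : path E s p ->
  (z, last s p) \in pedges s p -> edge_mono (z, last s p) == [::] -> vdeg_in s p (last s p) = 1.
Proof.
rewrite /vdeg_in => pth; have := SE_path_uniq pth; elim: p s pth => [|y p IH] s //=.
case/andP => e pth hu; rewrite /pedges /= big_cons.
case: p IH pth hu => [|w p] IH pth hu.
  by rewrite inE => /eqP [->] ->; rewrite /= eqxx big_nil addr0.
have hyt : y != last w p.
  by apply: contraNneq (andP (andP hu).2).1 => ->; apply: mem_last.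
rewrite /= (negbTE hyt) inE => /orP [/eqP [_ hh]|hin] hm; first by rewrite hh eqxx in hyt.
by rewrite (IH _ pth (andP hu).2 hin hm); case: ifP => _; rewrite ?add0r.
Qed.

Lemma vdeg_in_eq0 s p v : path E s p ->
  (forall e, e \in pedges s p -> alpha e.1 = alpha e.2 -> e.2 != v) -> vdeg_in s p v = 0.
Proof.
move=> pth h; rewrite /vdeg_in big_seq_cond; apply: big1 => e /andP [he hm].
have [ee _ _] := mem_pedges pth he.
by rewrite (negbTE (h e he (edge_mono_V ee hm))).
Qed.

(** * Weakly intersecting pairs of paths *)

Record admissible_pair (sX : V) (pX : seq V) (sY : V) (pY : seq V) : Prop := AdmissiblePair {
  adm_pathX : path E sX pX;
  adm_pathY : path E sY pY;
  adm_stdX : standard beta sX pX;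
  adm_stdY : standard beta sY pY;
  adm_wi : weakly_intersecting alpha beta sX pX sY pY;
  adm_end : alpha (last sX pX) = alpha (last sY pY);
  adm_start : alpha sX <> alpha sY \/ (alpha sX = 0 /\ alpha sY = 0) }.

Lemma admissible_pair_sym sX pX sY pY :
  admissible_pair sX pX sY pY -> admissible_pair sY pY sX pX.
Proof.
case=> HX HY stX stY Hwi Hend Hst; split => //.
- move=> a b; split => [[h1 h2]|[z [z1 [z2 z3]]]].
    by have [z [z1 [z2 z3]]] := (Hwi a b).1 (conj h2 h1); exists z.
  by have [] := (Hwi a b).2 (ex_intro _ z (conj z2 (conj z1 z3))).
- by case: Hst => [h|[h1 h2]]; [left => h'; apply: h | right].
Qed.

Section AdmissiblePair.
Variables (sX : V) (pX : seq V) (sY : V) (pY : seq V).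
Hypothesis HXY : admissible_pair sX pX sY pY.
Let HX := adm_pathX HXY.
Let HY := adm_pathY HXY.
Let stX := adm_stdX HXY.
Let stY := adm_stdY HXY.
Let Hwi := adm_wi HXY.
Let Hend := adm_end HXY.
Let Hst := adm_start HXY.

Local Notation tX := (last sX pX).
Local Notation tY := (last sY pY).

Lemma starts_neq : sX <> sY.
Proof.
move=> hs; have [h0 _] : alpha sX = 0 /\ alpha sY = 0 by case: Hst => // h; rewrite hs in h.
have ss := alpha_eq0_src h0.
case hpx: pX stX HX => [|y1 p1] // _ /= /andP [e1 pth1].
case hpy: pY stY HY => [|y2 p2] // _ /= /andP [e2 pth2].
rewrite -hs in e2.
have [hb1 _] := src_edge_inner e1 ss; have [hb2 _] := src_edge_inner e2 ss.
have a1 := Hedge_alpha_lt e1 hb1; have a2 := Hedge_alpha_lt e2 hb2.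
have [c [c1 [c2 c0]]] : exists c, c < alpha y1 /\ c < alpha y2 /\ alpha sX < c.
  case: (leP (alpha y1) (alpha y2)) => h.
  - by exists (alpha y1 / 2); do !split; lra.
  - by exists (alpha y2 / 2); do !split; lra.
have P1 : on_dpath alpha beta sX pX c (beta sX).
  by rewrite hpx; apply/on_dpath_cons; left; apply: onsegH => //; lra.
have P2 : on_dpath alpha beta sY pY c (beta sX).
  by rewrite hpy -hs; apply/on_dpath_cons; left; apply: onsegH => //; lra.
have [z [+ [_ [+ _]]]] := (Hwi c (beta sX)).1 (conj P1 P2).
rewrite !inE => /orP [] /eqP -> hz; first by rewrite hz ltxx in c0.
have [_ h _ _] := mem_path_box pth1 (mem_head y1 p1).
by move: hz; rewrite hpx /= => hz; move: (lt_le_trans c1 h); rewrite -hz ltxx.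
Qed.

Lemma common_point_end a b : onp sX pX a b -> onp sY pY a b ->
  tX = tY /\ a = alpha tX /\ b = beta tX.
Proof.
move=> h1 h2; have [z [hz1 [hz2 [-> ->]]]] := (Hwi a b).1 (conj h1 h2).
have lX := standard_alpha_lt HX stX; have lY := standard_alpha_lt HY stY.
move: hz1 hz2; rewrite !inE => /orP [] /eqP -> /orP [] /eqP e2.
- by case: (starts_neq e2).
- by move: lX; rewrite {1}e2 -Hend ltxx.
- by move: lY; rewrite -{1}e2 Hend ltxx.
- by rewrite e2.
Qed.

Lemma common_vertex_end v : v \in sX :: pX -> v \in sY :: pY -> v = tX /\ tX = tY.
Proof.
move=> hX hY; have [h1 [h2 h3]] := common_point_end (on_dpath_vertex hX) (on_dpath_vertex hY).
by split => //; apply: (coord_inj HG).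
Qed.

Definition ends_below := beta tX < beta tY \/
  (tX = tY /\ exists z, (z, tY) \in pedges sY pY /\ alpha z = alpha tY).

Definition above_X (a b : R) := forall b1, onp sX pX a b1 -> b1 < b.

(* [z :: p] is a tail of [Y] passing above [X]; [Y] can only come down to [X] at its end. *)
Lemma ends_below_from z p a b : path E z p -> {subset pedges z p <= pedges sY pY} ->
  (forall a b, onp z p a b -> onp sY pY a b) -> last z p = tY ->
  onp z p a b -> alpha sX <= a -> above_X a b -> ends_below.
Proof.
elim: p z a b => [|y p IH] z a b /=.
  move=> _ _ _ hz /on_dpath_nil [ha hb] hs hinv; left.
  have hv := on_dpath_vertex (mem_last sX pX).
  by rewrite Hend -hz -ha in hv; have := hinv _ hv; rewrite hb hz.
case/andP => e pth hsub hpts hl /on_dpath_cons h hs hinv.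
have sub' : {subset pedges y p <= pedges sY pY}.
  by move=> f hf; apply: hsub; rewrite /pedges /= inE hf orbT.
have pts' a' b' : onp y p a' b' -> onp sY pY a' b'.
  by move=> h'; apply: hpts; apply/on_dpath_cons; right.
case: h => [hseg|hr]; last exact: IH pth sub' pts' hl hr hs hinv.
have [_ y2 y3 _] := on_dpath_box HY (pts' _ _ (on_dpath_vertex (mem_head y p))).
have IHy := IH _ (alpha y) (beta y) pth sub' pts' hl (on_dpath_vertex (mem_head y p)).
case: (onseg_edge e hseg) => -[h1 [h2 [h3 [h4 h5]]]].
- apply: IHy => [|b2 hb2]; first lra.
  case: (ltP a (alpha y)) => ha.
  + have hat : a <= alpha tX by rewrite Hend; lra.
    have [b1 hb1] := on_dpath_exists HX hs hat.
    by have := on_dpath_antitone HX hb1 hb2 ha; have := hinv _ hb1; lra.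
  + have ea : a = alpha y by lra.
    rewrite -ea in hb2; have := hinv _ hb2; lra.
- case: (boolP ((y == tY) && (tX == tY))) => [/andP [/eqP hy /eqP ht] | hno].
    right; split => //; exists z; split; last by rewrite -hy.
    by apply: hsub; rewrite /pedges /= -hy mem_head.
  apply: IHy => [|b2 hb2]; first lra.
  have hb2' : b2 < b by apply: hinv; rewrite h3 h1.
  case: (ltP b2 (beta y)) => // hge; exfalso.
  have hQ : onp sY pY (alpha y) b2.
    by apply: hpts; apply/on_dpath_cons; left; rewrite -h1; apply: onsegV => //; lra.
  have [ht [ha' hb']] := common_point_end hb2 hQ.
  have ey : y = tY by apply: (coord_inj HG); [rewrite ha' ht | rewrite ht in hb'; lra].
  by move: hno; rewrite ey ht !eqxx.
Qed.

Lemma lower_ends_below : lower alpha beta sX pX sY pY -> ends_below.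
Proof.
case=> a [b [b' [h1 [h2 h3]]]]; have [q1 _ q3 _] := on_dpath_box HX h1.
apply: (ends_below_from HY (fun f hf => hf) (fun a b h => h) (erefl _) h2 q1).
move=> b1 hb1; case: (ltP b1 b') => // hge; exfalso.
have hX := on_dpath_convex HX h1 hb1 (ltW h3) hge.
by have [_ [_ hb]] := common_point_end hX h2; lra.
Qed.

Lemma cexpV_Vedge e v : e \in pedges sX pX -> alpha e.1 = alpha e.2 -> v \in sY :: pY ->
  cexpV e.2 v - cexpV e.1 v = (e.2 == v)%:Z.
Proof.
move=> he hae hv; have [ee _ _ q3] := mem_pedges_box HX he.
have hbe := Vedge_beta_lt ee hae.
case: eqP => [<-|ne].
  by rewrite /cexpV eqxx hae eqxx subrr sgz0 ltr0_sgz ?subr_lt0.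
rewrite /cexpV -hae; case: eqP => ha; last by rewrite subrr.
case: (ltgtP (beta v) (beta e.2)) => h1.
- by rewrite !ltr0_sgz ?subrr // subr_lt0 //; apply: lt_trans hbe.
- case: (ltP (beta e.1) (beta v)) => h2.
    by rewrite !gtr0_sgz ?subrr // subr_gt0 //; apply: lt_trans h2.
  have hXv : onp sX pX (alpha v) (beta v).
    by apply: (on_dpath_edge he); rewrite -ha; apply: onsegV => //; lra.
  by have [_ [_ hb]] := common_point_end hXv (on_dpath_vertex hv); exfalso; lra.
- by case: ne; apply: (coord_inj HG); [rewrite -hae ha | rewrite h1].
Qed.

Lemma Vedge_targets_neq e f : e \in pedges sX pX -> f \in pedges sY pY ->
  alpha e.1 = alpha e.2 -> alpha f.1 = alpha f.2 -> e.2 <> f.2.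
Proof.
move=> he hf hae haf e22.
have [ee e1X _] := mem_pedges HX he; have [_ _ _ q3] := mem_pedges_box HX he.
have [ff f1Y _] := mem_pedges HY hf; have [_ _ _ q4] := mem_pedges_box HY hf.
have hbe := Vedge_beta_lt ee hae; have hbf := Vedge_beta_lt ff haf.
case: (leP (beta e.1) (beta f.1)) => h.
- have hY : onp sY pY (alpha e.1) (beta e.1).
    apply: (on_dpath_edge hf); rewrite hae e22 -haf.
    by apply: onsegV => //; rewrite -?e22; lra.
  by have [_ [_ hb]] := common_point_end (on_dpath_vertex e1X) hY; lra.
- have hX : onp sX pX (alpha f.1) (beta f.1).
    apply: (on_dpath_edge he); rewrite haf -e22 -hae.
    by apply: onsegV => //; rewrite ?e22; lra.
  have [ht [_ hb]] := common_point_end hX (on_dpath_vertex f1Y).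
  by rewrite ht in hb; lra.
Qed.

Lemma Hedges_same_row_apart e f : e \in pedges sX pX -> f \in pedges sY pY ->
  beta e.1 = beta e.2 -> beta f.1 = beta f.2 -> beta e.1 = beta f.1 ->
  alpha e.2 < alpha f.1 \/ alpha f.2 < alpha e.1.
Proof.
move=> he hf hbe hbf hef.
have [ee e1X _] := mem_pedges HX he; have [_ _ q3 _] := mem_pedges_box HX he.
have [ff f1Y _] := mem_pedges HY hf; have [_ _ q4 _] := mem_pedges_box HY hf.
have hae := Hedge_alpha_lt ee hbe; have haf := Hedge_alpha_lt ff hbf.
case: (ltP (alpha e.2) (alpha f.1)) => h1; first by left.
case: (ltP (alpha f.2) (alpha e.1)) => h2; first by right.
exfalso; case: (leP (alpha e.1) (alpha f.1)) => h.
- have hX : onp sX pX (alpha f.1) (beta f.1).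
    by apply: (on_dpath_edge he); rewrite -hef; apply: onsegH.
  by have [_ [ha _]] := common_point_end hX (on_dpath_vertex f1Y); rewrite -Hend in q4; lra.
- have hY : onp sY pY (alpha e.1) (beta e.1).
    by apply: (on_dpath_edge hf); rewrite hef; apply: onsegH => //; lra.
  by have [_ [ha _]] := common_point_end (on_dpath_vertex e1X) hY; lra.
Qed.

Lemma mpair_cexpH_eq0 e f : e \in pedges sX pX -> f \in pedges sY pY -> mpair cexpH e f = 0.
Proof.
move=> he hf; have [ee _ _] := mem_pedges HX he; have [ff _ _] := mem_pedges HY hf.
have [me0|/(edge_mono_H ee) [hbe hae]] := eqVneq (edge_mono e) [::].
  by rewrite (mpair_const (k := 0)) ?mul0r // => ku lv; rewrite me0.
have [mf0|/(edge_mono_H ff) [hbf haf]] := eqVneq (edge_mono f) [::].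
  by rewrite (mpair_const (k := 0)) ?mul0r // => ku lv _; rewrite mf0.
have pair_const k : (forall u v, u \in [:: e.1; e.2] -> v \in [:: f.1; f.2] ->
    beta u = beta v -> sgz (alpha v - alpha u) = k) ->
    (beta e.1 != beta f.1 -> k = 0) -> mpair cexpH e f = k * mdeg e * mdeg f.
  move=> hk hk0; apply: mpair_const => ku lv /edge_mono_vertex hu /edge_mono_vertex hv.
  have {hu hv}[hu hv] : ku.2 \in [:: e.1; e.2] /\ lv.2 \in [:: f.1; f.2].
    by rewrite !inE; case: hu => ->; case: hv => ->; rewrite !eqxx ?orbT.
  rewrite /cexpH; case: eqP => [|huv]; first exact: hk.
  rewrite hk0 //; apply/eqP => hef; apply: huv.
  by move: hu hv; rewrite !inE => /orP [] /eqP -> /orP [] /eqP ->; lra.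
have [hef|hef] := eqVneq (beta e.1) (beta f.1); last first.
  rewrite (pair_const 0) ?mul0r // => u v hu hv huv; exfalso; move/eqP: hef; apply.
  by move: hu hv; rewrite !inE => /orP [] /eqP hu /orP [] /eqP hv; rewrite hu hv in huv; lra.
have apart := Hedges_same_row_apart he hf hbe hbf hef.
rewrite (pair_const (sgz (alpha f.1 - alpha e.1))) => [|u v hu hv _|]; last by rewrite hef eqxx.
- rewrite !mdegE; case: (boolP (isrc e.1)) => s1; case: (boolP (isrc f.1)) => s2;
    rewrite ?mulr0 //.
  have a1 := src_alpha s1; have a2 := src_alpha s2.
  by exfalso; case: apart => h; lra.
- move: hu hv; rewrite !inE => /orP [] /eqP -> /orP [] /eqP ->;
  by case: apart => h; [rewrite !gtr0_sgz // ?subr_gt0 | rewrite !ltr0_sgz // ?subr_lt0]; lra.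
Qed.

Lemma sum_meval_cexpV v : v \in sY :: pY ->
  \sum_(e <- pedges sX pX) meval (cexpV^~ v) e =
  cexpV tX v - (if isrc sX then 0 else cexpV sX v) - vdeg_in sX pX v.
Proof.
move=> hv; have pX0 : pX != [::] by move: stX; case: pX.
rewrite (sum_meval_path _ HX pX0) /vdeg_in; congr (_ - _).
rewrite big_seq_cond [RHS]big_seq_cond; apply: eq_bigr => e /andP [he hm].
have [ee _ _] := mem_pedges HX he.
exact: cexpV_Vedge he (edge_mono_V ee hm) hv.
Qed.

Lemma vdeg_in_Y v : v \in sY :: pY -> v != tY -> vdeg_in sX pX v = 0.
Proof.
move=> hv hvt; apply: (vdeg_in_eq0 HX) => e he _; apply: contraNneq hvt => e2v.
have [_ _ e2X] := mem_pedges HX he; rewrite -e2v in hv *.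
by have [h1 h2] := common_vertex_end e2X hv; rewrite h1 h2.
Qed.

Lemma vdeg_in_end : tX != tY -> vdeg_in sX pX tY = 0.
Proof.
move=> ht; apply: (vdeg_in_eq0 HX) => e he _; apply: contra_neq ht => e2t.
have [_ _ e2X] := mem_pedges HX he; rewrite e2t in e2X.
by have [] := common_vertex_end e2X (mem_last sY pY).
Qed.

Lemma vdeg_in_Vedge_target f : f \in pedges sY pY -> alpha f.1 = alpha f.2 ->
  vdeg_in sX pX f.2 = 0.
Proof.
move=> hf haf; apply: (vdeg_in_eq0 HX) => e he hae; apply/eqP.
exact: Vedge_targets_neq he hf hae haf.
Qed.

Lemma cexpV_start_end : cexpV sX tY = 0.
Proof.
have := standard_alpha_lt HX stX.
by rewrite /cexpV -Hend; case: eqP => // ->; rewrite ltxx.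
Qed.

Lemma cexpV_starts : ~~ isrc sY -> cexpV sX sY = 0.
Proof.
move=> ns; rewrite /cexpV; case: eqP => // h.
by case: Hst => [//|[_ /alpha_eq0_src hs]]; rewrite hs in ns.
Qed.

Lemma start_notin v : v \in sY :: pY -> v != sX.
Proof.
move=> hv; apply/eqP => h; rewrite h in hv.
have [h1 _] := common_vertex_end (mem_head sX pX) hv.
by have := standard_alpha_lt HX stX; rewrite -h1 ltxx.
Qed.
End AdmissiblePair.

Section Commutation.
Variables (K : fieldType) (A : unitAlgType K) (q : K) (x : V -> A).
Hypotheses (q_neq0 : q != 0) (LG : LG_relations E alpha beta src snk q x).

Local Notation ew := (edge_weight beta src snk x).

Lemma qcommute_inner u v : inn u -> inn v -> qcommute q (x u) (x v) (cexp u v).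
Proof.
move=> iu iv; have [<-|/eqP neq] := eqVneq u v.
  by rewrite /qcommute /cexp /cexpH /cexpV !eqxx !subrr sgz0 expr0z scale1r.
have [_ rel] := LG.
have forward a b : inn a -> inn b -> a <> b ->
    connect (Hedge E beta) a b \/ connect (Vedge E alpha) b a ->
    qcommute q (x a) (x b) (cexp a b).
  move=> ia ib nab [h|h].
    by rewrite cexp_Hpath // /qcommute expr1z; apply: (rel a b ia ib nab).1.
  rewrite cexp_anti (cexp_Vpath (nesym nab) h) opprK /qcommute expr1z.
  exact: (rel b a ib ia (nesym nab)).2.1.
have backward : connect (Hedge E beta) v u \/ connect (Vedge E alpha) u v ->
    qcommute q (x u) (x v) (cexp u v).
  by move=> h; rewrite cexp_anti; apply/(qcommute_sym q_neq0)/forward => //; apply: nesym.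
have [hb|hb] := eqVneq (beta u) (beta v).
  have nsnk : ~ (is_snk snk u /\ is_snk snk v /\ u <> v).
    by case=> hu _; move: iu; rewrite /inner hu andbF.
  by case: ((conv_beta HG nsnk).1 hb) => h; [apply: forward => //; left | apply: backward; left].
have [ha|ha] := eqVneq (alpha u) (alpha v).
  have nsrc : ~ (isrc u /\ isrc v /\ u <> v) by case=> hu _; move: iu; rewrite /inner hu.
  by case: ((conv_alpha HG nsrc).1 ha) => h; [apply: backward; right | apply: forward => //; right].
rewrite /cexp /cexpH /cexpV (negbTE hb) (negbTE ha) addr0 /qcommute expr0z scale1r.
apply: (rel u v iu iv neq).2.2.
- by apply/negP => /connect_Hedge_coords [h _]; rewrite h eqxx in hb.
- by apply/negP => /connect_Hedge_coords [h _]; rewrite h eqxx in hb.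
- by apply/negP => /connect_Vedge_coords [h _]; rewrite h eqxx in ha.
- by apply/negP => /connect_Vedge_coords [h _]; rewrite h eqxx in ha.
Qed.

Lemma qcommute_edge_weight_gen e v : E e.1 e.2 -> inn v ->
  qcommute q (ew e) (x v) (meval (cexp^~ v) e).
Proof.
move=> ee iv; rewrite /edge_weight /meval /edge_mono.
case: ifP => hs.
  have [_ i2] := src_edge_inner ee hs.
  by rewrite big_cons big_nil /= mul1r addr0; apply: qcommute_inner.
case: ifP => [/andP [/andP [i1 i2] _]|_]; last by rewrite big_nil; apply: qcommute1l.
rewrite !big_cons big_nil /= mul1r addr0 mulN1r.
apply: (qcommuteMl q_neq0); last exact: qcommute_inner.
by apply: (qcommuteVl q_neq0); [apply: LG.1 | apply: qcommute_inner].
Qed.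

Lemma qcommute_edge_weights e f : E e.1 e.2 -> E f.1 f.2 ->
  qcommute q (ew e) (ew f) (mpair cexp e f).
Proof.
move=> ee ff; rewrite /mpair {2}/edge_weight /meval /edge_mono.
case: ifP => hs.
  have [_ i2] := src_edge_inner ff hs.
  by rewrite big_cons big_nil /= mul1r addr0; apply: qcommute_edge_weight_gen.
case: ifP => [/andP [/andP [i1 i2] _]|_]; last by rewrite big_nil; apply: qcommute1r.
rewrite !big_cons big_nil /= mul1r addr0 mulN1r.
apply: (qcommuteMr q_neq0); last exact: qcommute_edge_weight_gen.
by apply: (qcommuteVr q_neq0); [apply: LG.1 | apply: qcommute_edge_weight_gen].
Qed.

Lemma qcommute_path_weights sP pP sQ pQ : path E sP pP -> path E sQ pQ ->
  qcommute q (path_weight beta src snk x sP pP) (path_weight beta src snk x sQ pQ)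
    (\sum_(e <- pedges sP pP) \sum_(f <- pedges sQ pQ) mpair cexp e f).
Proof.
move=> HP HQ; apply: (qcommute_prodl q_neq0) => e /(mem_pedges HP) [ee _ _].
by apply: (qcommute_prodr q_neq0) => f /(mem_pedges HQ) [ff _ _]; apply: qcommute_edge_weights.
Qed.

End Commutation.

Section PairSums.
Variables (sP : V) (pP : seq V) (sQ : V) (pQ : seq V).
Hypothesis HPQ : admissible_pair sP pP sQ pQ.
Let HQP := admissible_pair_sym HPQ.

Local Notation tP := (last sP pP).
Local Notation tQ := (last sQ pQ).

Lemma sum_mpair_cexpH : \sum_(e <- pedges sP pP) \sum_(f <- pedges sQ pQ) mpair cexpH e f = 0.
Proof.
rewrite big_seq; apply: big1 => e he; rewrite big_seq; apply: big1 => f hf.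
exact: (mpair_cexpH_eq0 HPQ he hf).
Qed.

Lemma sum_mpair_cexpV :
  \sum_(e <- pedges sP pP) \sum_(f <- pedges sQ pQ) mpair cexpV e f =
  cexpV tP tQ - vdeg_in sP pP tQ + vdeg_in sQ pQ tP.
Proof.
have [HP HQ _ stQ _ _ _] := HPQ.
have pQ0 : pQ != [::] by move: stQ; case: pQ.
pose colE e v := meval (cexpV^~ v) e.
have rowQ e : \sum_(f <- pedges sQ pQ) mpair cexpV e f =
    colE e tQ - (if isrc sQ then 0 else colE e sQ) -
    \sum_(f <- pedges sQ pQ | edge_mono f == [::]) (colE e f.2 - colE e f.1).
  exact: sum_meval_path (colE e) HQ pQ0.
rewrite (eq_bigr _ (fun e _ => rowQ e)) !sumrB exchange_big /=.
have endQ : \sum_(e <- pedges sP pP) colE e tQ = cexpV tP tQ - vdeg_in sP pP tQ.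
  by rewrite (sum_meval_cexpV HPQ (mem_last _ _)) (cexpV_start_end HPQ) if_same subr0.
have startQ : \sum_(e <- pedges sP pP) (if isrc sQ then 0 else colE e sQ) = 0.
  case: (boolP (isrc sQ)) => hs /=; first by rewrite big1.
  have sQ_tQ : sQ != tQ.
    by apply/eqP => h; have := standard_alpha_lt HQ stQ; rewrite -h ltxx.
  rewrite (sum_meval_cexpV HPQ (mem_head _ _)) (vdeg_in_Y HPQ (mem_head _ _) sQ_tQ).
  by rewrite (cexpV_starts HPQ hs) if_same cexpV_anti (cexpV_start_end HQP) !subr0 oppr0.
have VedgeQ : \sum_(f <- pedges sQ pQ | edge_mono f == [::])
    \sum_(e <- pedges sP pP) (colE e f.2 - colE e f.1) = - vdeg_in sQ pQ tP.
  rewrite /vdeg_in -sumrN big_seq_cond [RHS]big_seq_cond; apply: eq_bigr => f /andP [hf hm].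
  have [ff f1Q f2Q] := mem_pedges HQ hf; have hV := edge_mono_V ff hm.
  have f1_tQ : f.1 != tQ.
    apply/eqP => h; have [_ _ _ hb] := mem_pedges_box HQ hf.
    by have := Vedge_beta_lt ff hV; rewrite h => /lt_le_trans/(_ hb); rewrite ltxx.
  rewrite sumrB !(sum_meval_cexpV HPQ) // (vdeg_in_Vedge_target HPQ hf hV).
  rewrite (vdeg_in_Y HPQ f1Q f1_tQ) !(cexpV_anti _ f.2) !(cexpV_anti _ f.1).
  have := cexpV_Vedge HQP hf hV (mem_last sP pP).
  have := cexpV_Vedge HQP hf hV (mem_head sP pP).
  rewrite (negbTE (start_notin HPQ f2Q)).
  by case: ifP => _; case: eqP => _ /= h1 h2; lra.
by rewrite endQ startQ VedgeQ; ring.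
Qed.

Lemma sum_mpair_cexp : lower alpha beta sP pP sQ pQ ->
  \sum_(e <- pedges sP pP) \sum_(f <- pedges sQ pQ) mpair cexp e f = 1.
Proof.
move=> Hlow; have [_ HQ _ _ _ Hend _] := HPQ.
have -> : \sum_(e <- pedges sP pP) \sum_(f <- pedges sQ pQ) mpair cexp e f =
    \sum_(e <- pedges sP pP) \sum_(f <- pedges sQ pQ) mpair cexpH e f +
    \sum_(e <- pedges sP pP) \sum_(f <- pedges sQ pQ) mpair cexpV e f.
  rewrite -big_split; apply: eq_bigr => e _; rewrite -big_split; apply: eq_bigr => f _.
  exact: mpairD.
rewrite sum_mpair_cexpH add0r sum_mpair_cexpV.
case: (lower_ends_below HPQ Hlow) => [hb|[ht [z [hz ha]]]].
- have ne : tP != tQ by apply/eqP => h; rewrite h ltxx in hb.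
  rewrite (vdeg_in_end HPQ ne) (vdeg_in_end HQP _); last by rewrite eq_sym.
  by rewrite /cexpV Hend eqxx gtr0_sgz ?subr_gt0 // subr0 addr0.
- have [ff _ _] := mem_pedges HQ hz.
  rewrite (vdeg_in_Vedge_target HPQ hz ha) /cexpV ht eqxx subrr sgz0 subr0 add0r.
  apply: (vdeg_in_last HQ hz); apply/negPn/negP => /(edge_mono_H ff) [_].
  by rewrite /= ha ltxx.
Qed.

End PairSums.
End SEGraph.

Theorem lemmaA3 (R : realType) (V : finType) (E : rel V) (alpha beta : V -> R)
  (m n : nat) (src : 'I_m -> V) (snk : 'I_n -> V)
  (K : fieldType) (A : unitAlgType K) (q : K) (x : V -> A)
  (sP : V) (pP : seq V) (sQ : V) (pQ : seq V) :
  SE_graph E alpha beta src snk ->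
  q != 0 ->
  LG_relations E alpha beta src snk q x ->
  path E sP pP -> path E sQ pQ ->
  standard beta sP pP -> standard beta sQ pQ ->
  weakly_intersecting alpha beta sP pP sQ pQ ->
  alpha (last sP pP) = alpha (last sQ pQ) ->
  (alpha sP <> alpha sQ \/ (alpha sP = 0 /\ alpha sQ = 0)) ->
  lower alpha beta sP pP sQ pQ ->
  path_weight beta src snk x sP pP * path_weight beta src snk x sQ pQ
    = q *: (path_weight beta src snk x sQ pQ * path_weight beta src snk x sP pP).
Proof.
move=> HG q_neq0 LG HP HQ stP stQ Hwi Hend Hst Hlow.
have HPQ := AdmissiblePair HP HQ stP stQ Hwi Hend Hst.
have := qcommute_path_weights HG q_neq0 LG HP HQ.
by rewrite (sum_mpair_cexp HG HPQ Hlow) /qcommute expr1z.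
Qed.
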